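(* Let $(\alpha_n)_{n\ge 0}$ be complex numbers with $|\alpha_n|<1$, and let $\Phi_n$, $\langle\cdot,\cdot\rangle$ and $\mu_{n,r,s}$ be as in the context. For all nonnegative integers $n,r,s$, the generalized moment $\mu_{n,r,s}$ is a polynomial with integer coefficients in $\{\alpha_j : 0\le j<n+r\}$ and $\{\overline{\alpha_j} : 0\le j<n+r\}$. Moreover, writing $\beta_j=-\overline{\alpha_j}$ for all $j$, $\mu_{n,r,s}$ can be written as a polynomial in the variables $\alpha_0,\alpha_1,\dots,\beta_0,\beta_1,\dots$ all of whose coefficients are positive integers, i.e. as an element of $\mathbb{Z}[\alpha_0,\alpha_1,\dots,\beta_0,\beta_1,\dots]$ with positive coefficients. Finally, the reciprocity \[ \mu_{-n,r,s}=\overline{\mu_{n,s,r}}\cdot\frac{\prod_{j=0}^{r-1}(1-|\alpha_j|^2)}{\prod_{j=0}^{s-1}(1-|\alpha_j|^2)} \] holds; in particular $\mu_{-n}=\overline{\mu_n}$.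
   Context: For a polynomial $f(z)=\sum_{k=0}^n a_kz^k$ of degree $n$, write $\overline{f}(z)=\sum_{k=0}^n\overline{a_k}z^k$ and $f^*(z)=z^n\overline{f}(1/z)$. Given complex numbers $\alpha_n$ with $|\alpha_n|<1$, define monic polynomials $\Phi_n$ with $\deg\Phi_n=n$ by $\Phi_0=1$ and $\Phi_{n+1}(z)=z\Phi_n(z)-\overline{\alpha_n}\,\Phi_n^*(z)$ (here $\Phi_n^*(z)=z^n\overline{\Phi_n}(1/z)$). Let $V$ be the space of Laurent polynomials in $z$ over $\mathbb{C}$, and let $\mathcal{L}$ be the unique linear functional on $V$ with $\mathcal{L}(1)=1$ and $\mathcal{L}(\Phi_m(z)\overline{\Phi_n}(1/z))=0$ for $m\ne n$ (for a Laurent polynomial $g$, $\overline{g}$ conjugates all coefficients). Define $\langle f,g\rangle=\mathcal{L}(f(z)\overline{g}(1/z))$ for $f,g\in V$; one has $\langle\Phi_s,\Phi_s\rangle=\prod_{j=0}^{s-1}(1-|\alpha_j|^2)$. For an integer $n$ and nonnegative integers $r,s$, the generalized moment is $\mu_{n,r,s}=\langle\Phi_s(z),z^n\Phi_r(z)\rangle/\langle\Phi_s(z),\Phi_s(z)\rangle$, and $\mu_n=\mu_{n,0,0}=\mathcal{L}(z^{-n})$. *)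

From HB Require Import structures.
From mathcomp Require Import all_boot all_order all_algebra.
From mathcomp Require Import mpoly.
Set Implicit Arguments. Unset Strict Implicit. Unset Printing Implicit Defensive.
Import Order.TTheory GRing.Theory Num.Theory.
Local Open Scope ring_scope.

Section OPUC.
Variable C : numClosedFieldType.

(* f^*(z) = z^n \bar f(1/z) for a polynomial f of (nominal) degree n *)
Definition rev_conj (n : nat) (f : {poly C}) : {poly C} :=
  \poly_(i < n.+1) (f`_(n - i))^*.

Fixpoint Phi (alpha : nat -> C) (n : nat) : {poly C} :=
  match n with
  | 0 => 1
  | n'.+1 => 'X * Phi alpha n' - (alpha n')^* *: rev_conj n' (Phi alpha n')
  end.

(* A linear functional L on Laurent polynomials C[z, z^-1] is determined by
   its values on the basis z^k, k : int; we encode L by  mom k = L(z^k).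
   Then for polynomials f, g and n : int,
     <f, z^n g> = L( f(z) * conj(z^n g)(1/z) )
                = sum_{i,j} f_i * conj(g_j) * L(z^(i - j - n)). *)
Definition ipz (mom : int -> C) (f g : {poly C}) (n : int) : C :=
  \sum_(i < size f) \sum_(j < size g) f`_i * (g`_j)^* * mom (i%:Z - j%:Z - n).

Definition ip (mom : int -> C) (f g : {poly C}) : C := ipz mom f g 0.

Definition is_OPUC_functional (alpha : nat -> C) (mom : int -> C) : Prop :=
  mom 0 = 1 /\
  forall m n : nat, m <> n -> ip mom (Phi alpha m) (Phi alpha n) = 0.

Definition gmu (alpha : nat -> C) (mom : int -> C) (n : int) (r s : nat) : C :=
  ipz mom (Phi alpha s) (Phi alpha r) n / ip mom (Phi alpha s) (Phi alpha s).

Definition mu (alpha : nat -> C) (mom : int -> C) (n : int) : C :=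
  gmu alpha mom n 0 0.

Definition val_ac (alpha : nat -> C) (k : nat) (i : 'I_(k + k)) : C :=
  match split i with
  | inl j => alpha j
  | inr j => (alpha j)^*
  end.

Definition val_ab (alpha : nat -> C) (k : nat) (i : 'I_(k + k)) : C :=
  match split i with
  | inl j => alpha j
  | inr j => - (alpha j)^*
  end.

Definition zeval (k : nat) (v : 'I_k -> C) (P : {mpoly int[k]}) : C :=
  mmap (fun z : int => z%:~R) v P.

End OPUC.
Arguments val_ac {C} alpha k i.
Arguments val_ab {C} alpha k i.

From HB Require Import structures.
From mathcomp Require Import all_boot all_order all_algebra.
From mathcomp Require Import mpoly.
From mathcomp Require Import zify ring.
Set Implicit Arguments. Unset Strict Implicit. Unset Printing Implicit Defensive.
Import Order.TTheory GRing.Theory Num.Theory.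
Local Open Scope ring_scope.

(* Szego's recursion gives [z Phi_s = Phi_(s+1) + alpha_s^* Phi_s^*], and its
   companion [Phi_(s+1)^* = rho_s^2 Phi_s^* - alpha_s Phi_(s+1)] expands
   [Phi_s^*] in the basis [Phi_0, ..., Phi_s]; with
   [beta_j = - alpha_j^*] and [rho_j^2 = 1 - |alpha_j|^2 = 1 + alpha_j beta_j]
   all coefficients are conjugates of polynomials in the [alpha_j], [beta_j]
   with nonnegative integer coefficients.  Iterating, so are the coordinates
   of [z^n Phi_r], and by orthogonality the coordinate on [Phi_t] is
   [conj mu_(n,r,t)].  Reciprocity follows from the Hermitian symmetry
   [L(z^-k) = conj L(z^k)]: the functional [k |-> conj L(z^-k)] again
   orthogonalises the [Phi_n], and such a functional is unique; moreover
   [<Phi_s, Phi_s> = rho_0^2 ... rho_(s-1)^2]. *)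

Lemma sum_ord_widen (V : nmodType) m N (F : nat -> V) :
  (m <= N)%N -> (forall i, (m <= i)%N -> F i = 0) ->
  \sum_(i < m) F i = \sum_(i < N) F i.
Proof.
move=> mN F0; rewrite (big_ord_widen N F mN) big_mkcond; apply: eq_bigr => i _.
by case: ltnP => // /F0 ->.
Qed.

Section SesquilinearForm.
Variables (C : numClosedFieldType) (mom : int -> C).
Implicit Types (f g h : {poly C}) (n : int).

Definition ipz_term f g n (i j : nat) := f`_i * (g`_j)^* * mom (i%:Z - j%:Z - n).

Lemma ipz_widen f g n N1 N2 : (size f <= N1)%N -> (size g <= N2)%N ->
  ipz mom f g n = \sum_(i < N1) \sum_(j < N2) ipz_term f g n i j.
Proof.
move=> f_N1 g_N2; rewrite /ipz.
transitivity (\sum_(i < size f) \sum_(j < N2) ipz_term f g n i j).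
  apply: eq_bigr => i _; apply: (@sum_ord_widen _ (size g) N2 (ipz_term f g n i)) => // j gj.
  by rewrite /ipz_term (nth_default _ gj) conjC0 mulr0 mul0r.
apply: (@sum_ord_widen _ (size f) N1 (fun i => \sum_(j < N2) ipz_term f g n i j)) => // i fi.
by rewrite big1 // => j _; rewrite /ipz_term (nth_default _ fi) !mul0r.
Qed.

Lemma ipzDl f1 f2 g n : ipz mom (f1 + f2) g n = ipz mom f1 g n + ipz mom f2 g n.
Proof.
rewrite !(@ipz_widen _ _ _ (maxn (size f1) (size f2)) (size g))
  ?leq_maxl ?leq_maxr ?size_polyD //.
rewrite -big_split; apply: eq_bigr => i _; rewrite -big_split; apply: eq_bigr => j _.
by rewrite /ipz_term coefD !mulrDl.
Qed.

Lemma ipzDr f g1 g2 n : ipz mom f (g1 + g2) n = ipz mom f g1 n + ipz mom f g2 n.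
Proof.
rewrite !(@ipz_widen _ _ _ (size f) (maxn (size g1) (size g2)))
  ?leq_maxl ?leq_maxr ?size_polyD //.
rewrite -big_split; apply: eq_bigr => i _; rewrite -big_split; apply: eq_bigr => j _.
by rewrite /ipz_term coefD rmorphD /= mulrDr !mulrDl.
Qed.

Lemma ipzZl c f g n : ipz mom (c *: f) g n = c * ipz mom f g n.
Proof.
rewrite !(@ipz_widen _ _ _ (size f) (size g)) ?size_scale_leq //.
rewrite mulr_sumr; apply: eq_bigr => i _; rewrite mulr_sumr; apply: eq_bigr => j _.
by rewrite /ipz_term coefZ !mulrA.
Qed.

Lemma ipzZr c f g n : ipz mom f (c *: g) n = c^* * ipz mom f g n.
Proof.
rewrite !(@ipz_widen _ _ _ (size f) (size g)) ?size_scale_leq //.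
rewrite mulr_sumr; apply: eq_bigr => i _; rewrite mulr_sumr; apply: eq_bigr => j _.
by rewrite /ipz_term coefZ rmorphM /=; ring.
Qed.

Lemma ipz0l g n : ipz mom 0 g n = 0.
Proof. by rewrite /ipz size_poly0 big_ord0. Qed.

Lemma ipz0r f n : ipz mom f 0 n = 0.
Proof. by rewrite /ipz big1 // => i _; rewrite size_poly0 big_ord0. Qed.

Lemma ipzBl c f h g n : ipz mom (f - c *: h) g n = ipz mom f g n - c * ipz mom h g n.
Proof. by rewrite ipzDl -scaleNr ipzZl mulNr. Qed.

Lemma ipzBr c f h g n : ipz mom g (f - c *: h) n = ipz mom g f n - c^* * ipz mom g h n.
Proof. by rewrite ipzDr -scaleNr ipzZr rmorphN mulNr. Qed.

Lemma ipz_suml N (c : 'I_N -> C) (F : 'I_N -> {poly C}) g n :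
  ipz mom (\sum_(s < N) c s *: F s) g n = \sum_(s < N) c s * ipz mom (F s) g n.
Proof.
rewrite (big_morph (fun f => ipz mom f g n) (fun x y => ipzDl x y g n) (ipz0l g n)).
by apply: eq_bigr => s _; rewrite ipzZl.
Qed.

Lemma ipz_sumr N (c : 'I_N -> C) (F : 'I_N -> {poly C}) f n :
  ipz mom f (\sum_(s < N) c s *: F s) n = \sum_(s < N) (c s)^* * ipz mom f (F s) n.
Proof.
rewrite (big_morph (fun g => ipz mom f g n) (fun x y => ipzDr f x y n) (ipz0r f n)).
by apply: eq_bigr => s _; rewrite ipzZr.
Qed.

Lemma size_mulX_leq f : (size ('X * f)%R <= (size f).+1)%N.
Proof. by apply: leq_trans (size_polyMleq _ _) _; rewrite size_polyX. Qed.

Lemma ipz_mulXr f g n : ipz mom f ('X * g) n = ipz mom f g (n + 1).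
Proof.
rewrite (@ipz_widen _ _ _ (size f) (size g).+1) ?size_mulX_leq //.
rewrite (@ipz_widen _ _ _ (size f) (size g)) //.
apply: eq_bigr => i _; rewrite big_ord_recl /ipz_term coefXM eqxx rmorph0 mulr0 mul0r add0r.
by apply: eq_bigr => j _; rewrite lift0 coefXM /=; congr (_ * mom _); lia.
Qed.

Lemma ipz_mulXl f g n : ipz mom ('X * f) g n = ipz mom f g (n - 1).
Proof.
rewrite (@ipz_widen _ _ _ (size f).+1 (size g)) ?size_mulX_leq //.
rewrite (@ipz_widen _ _ _ (size f) (size g)) //.
rewrite big_ord_recl big1 ?add0r => [|j _]; last by rewrite /ipz_term coefXM !mul0r.
apply: eq_bigr => i _; apply: eq_bigr => j _.
by rewrite /ipz_term lift0 coefXM /=; congr (_ * mom _); lia.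
Qed.

Lemma ipz_mulX f g n : ipz mom ('X * f) ('X * g) n = ipz mom f g n.
Proof. by rewrite ipz_mulXr ipz_mulXl addrK. Qed.

Lemma ipz_mulXnr f g m n : ipz mom f ('X^m * g) n = ipz mom f g (n + m%:Z).
Proof.
elim: m n => [|m IHm] n; first by rewrite expr0 mul1r addr0.
by rewrite exprS -mulrA ipz_mulXr IHm; congr ipz; lia.
Qed.

Lemma ipz_conj f g n :
  ipz (fun k => (mom (- k))^*) f g n = (ipz mom g f (- n))^*.
Proof.
rewrite /ipz rmorph_sum /=.
under [in RHS]eq_bigr do rewrite rmorph_sum /=.
rewrite [in RHS]exchange_big /=; apply: eq_bigr => i _; apply: eq_bigr => j _.
by rewrite !rmorphM /= conjCK [f`_i * _]mulrC; congr (_ * (mom _)^*); lia.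
Qed.

End SesquilinearForm.

(* With [a = alpha] and [b = beta = - alpha^*], [1 + a j * b j] is
   [rho_j^2 = 1 - |alpha_j|^2], and the conjugates of [rev_coef s u],
   [mulX_coef s t] and [gmoment n r t] are the coordinates of [Phi_s^*],
   [z Phi_s] and [z^n Phi_r] in the basis [Phi_0, Phi_1, ...]. *)
Section GenericMoments.
Variables (R : comPzSemiRingType) (a b : nat -> R).

Definition rho2_prod lo hi := \prod_(lo <= j < hi) (1 + a j * b j).

Definition rev_coef s u := if u == 0%N then rho2_prod 0 s else b u.-1 * rho2_prod u s.

Definition mulX_coef s t :=
  if t == s.+1 then 1 else if (t <= s)%N then a s * rev_coef s t else 0.

Fixpoint gmoment n r t := match n with
  | 0%N => (r == t)%:R
  | n'.+1 => \sum_(s < (n' + r).+1) gmoment n' r s * mulX_coef s t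
  end.

Lemma mulX_coef_eq0 s t : (s.+1 < t)%N -> mulX_coef s t = 0.
Proof. by move=> st; rewrite /mulX_coef gtn_eqF // leqNgt (ltn_trans _ st). Qed.

End GenericMoments.

Lemma rmorph_gmoment (R S : comPzSemiRingType) (f : {rmorphism R -> S}) (a b : nat -> R) n r t :
  f (gmoment a b n r t) = gmoment (f \o a) (f \o b) n r t.
Proof.
have f_rho2 lo s : f (rho2_prod a b lo s) = rho2_prod (f \o a) (f \o b) lo s.
  by rewrite rmorph_prod; apply: eq_bigr => i _; rewrite rmorphD rmorph1 rmorphM.
elim: n t => [|n IHn] t /=; first by rewrite rmorph_nat.
rewrite rmorph_sum; apply: eq_bigr => s _; rewrite rmorphM IHn /mulX_coef.
case: eqP => _; first by rewrite rmorph1.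
case: ifP => _; last by rewrite rmorph0.
by rewrite rmorphM /rev_coef; case: eqP => _; rewrite ?rmorphM f_rho2.
Qed.

Lemma eq_gmoment (R : comPzSemiRingType) (a b a' b' : nat -> R) n r t :
  (forall j, (j < n + r)%N -> a j = a' j /\ b j = b' j) ->
  gmoment a b n r t = gmoment a' b' n r t.
Proof.
elim: n t => [|n IHn] t eq_ab //=; apply: eq_bigr => s _.
rewrite IHn => [|j lt_j]; last by apply: eq_ab; lia.
have lt_s : (s < n.+1 + r)%N by have := ltn_ord s; lia.
have eq_rho2 lo : rho2_prod a b lo s = rho2_prod a' b' lo s.
  rewrite /rho2_prod !big_nat; apply: eq_bigr => j /andP[_ lt_js].
  by case: (eq_ab j) => [|-> ->] //; lia.
rewrite /mulX_coef; case: eqP => // _; case: leqP => // le_ts.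
rewrite /rev_coef (proj1 (eq_ab s lt_s)) !eq_rho2.
by case: eqP => // t_neq0; case: (eq_ab t.-1) => [|_ ->] //; lia.
Qed.

Section NonnegCoefficients.
Variables (R : numDomainType) (k : nat).

Definition nneg_mpoly (p : {mpoly R[k]}) := forall m, 0 <= p@_m.

Lemma nneg_mpoly0 : nneg_mpoly 0.
Proof. by move=> m; rewrite mcoeff0. Qed.

Lemma nneg_mpoly1 : nneg_mpoly 1.
Proof. by move=> m; rewrite mcoeff1 ler0n. Qed.

Lemma nneg_mpoly_nat n : nneg_mpoly n%:R.
Proof. by move=> m; rewrite mcoeffMn mcoeff1 -mulrnA ler0n. Qed.

Lemma nneg_mpolyX i : nneg_mpoly 'X_i.
Proof. by move=> m; rewrite mcoeffX ler0n. Qed.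

Lemma nneg_mpolyD p q : nneg_mpoly p -> nneg_mpoly q -> nneg_mpoly (p + q).
Proof. by move=> p0 q0 m; rewrite mcoeffD addr_ge0. Qed.

Lemma nneg_mpolyM p q : nneg_mpoly p -> nneg_mpoly q -> nneg_mpoly (p * q).
Proof. by move=> p0 q0 m; rewrite mcoeffM sumr_ge0 // => i _; rewrite mulr_ge0. Qed.

Lemma nneg_gmoment (a b : nat -> {mpoly R[k]}) n r t :
  (forall j, nneg_mpoly (a j)) -> (forall j, nneg_mpoly (b j)) ->
  nneg_mpoly (gmoment a b n r t).
Proof.
move=> a0 b0.
have nneg_rho2 lo hi : nneg_mpoly (rho2_prod a b lo hi).
  apply: big_ind; [exact: nneg_mpoly1 | exact: nneg_mpolyM | move=> j _].
  by apply: nneg_mpolyD; [exact: nneg_mpoly1 | exact: nneg_mpolyM].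
elim: n t => [|n IHn] t /=; first exact: nneg_mpoly_nat.
apply: big_ind; [exact: nneg_mpoly0 | exact: nneg_mpolyD | move=> s _].
apply: nneg_mpolyM => //; rewrite /mulX_coef.
case: eqP => _; first exact: nneg_mpoly1.
case: ifP => _; last exact: nneg_mpoly0.
by apply: nneg_mpolyM => //; rewrite /rev_coef; case: eqP => _ //; exact: nneg_mpolyM.
Qed.

End NonnegCoefficients.

Section ReversedPolynomial.
Variable C : numClosedFieldType.
Implicit Types (f g : {poly C}).

Lemma coef_rev_conj n f i : (rev_conj n f)`_i = if (i <= n)%N then (f`_(n - i))^* else 0.
Proof. by rewrite /rev_conj coef_poly ltnS. Qed.

Lemma size_rev_conj n f : (size (rev_conj n f) <= n.+1)%N.
Proof. exact: size_poly. Qed.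

Lemma rev_conj1 : rev_conj 0 (1 : {poly C}) = 1.
Proof. by apply/polyP => -[|i]; rewrite coef_rev_conj !coef1 //= conjC1. Qed.

Lemma rev_conjB n c f g : rev_conj n (f - c *: g) = rev_conj n f - c^* *: rev_conj n g.
Proof.
apply/polyP => i; rewrite coefB coefZ !coef_rev_conj.
by case: ifP => _; rewrite ?mulr0 ?subr0 // coefB coefZ rmorphB rmorphM.
Qed.

Lemma rev_conjK n f : (size f <= n.+1)%N -> rev_conj n (rev_conj n f) = f.
Proof.
move=> size_f; apply/polyP => i; rewrite !coef_rev_conj.
case: leqP => [le_in | lt_ni]; first by rewrite leq_subr conjCK subKn.
by rewrite nth_default // (leq_trans size_f lt_ni).
Qed.

Lemma rev_conjS_mulX n f : (size f <= n.+1)%N -> rev_conj n.+1 ('X * f) = rev_conj n f.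
Proof.
move=> size_f; apply/polyP => i; rewrite !coef_rev_conj coefXM.
case: (ltnP n i) => [lt_ni | le_in]; last by rewrite (leqW le_in) subSn.
by rewrite subn_eq0 lt_ni conjC0 if_same.
Qed.

Lemma rev_conjS n g : (size g <= n.+1)%N -> rev_conj n.+1 g = 'X * rev_conj n g.
Proof.
move=> size_g; apply/polyP => -[|i]; rewrite coefXM !coef_rev_conj //=.
by rewrite subn0 nth_default ?conjC0.
Qed.

End ReversedPolynomial.

Section SzegoRecursion.
Variables (C : numClosedFieldType) (alpha : nat -> C).
Local Notation Phi := (Phi alpha).

Definition beta j := - (alpha j)^*.

Lemma size_Phi s : (size (Phi s) <= s.+1)%N.
Proof.
elim: s => [|s IHs] /=; first by rewrite size_poly1.
apply: leq_trans (size_polyD _ _) _; rewrite size_polyN geq_max.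
rewrite (leq_trans (size_mulX_leq _)) //=.
by rewrite (leq_trans (size_scale_leq _ _)) // (leq_trans (size_rev_conj _ _)).
Qed.

Lemma coef_Phi_deg s : (Phi s)`_s = 1.
Proof.
elim: s => [|s IHs] /=; first by rewrite coef1.
by rewrite coefB coefXM /= IHs coefZ coef_rev_conj ltnn mulr0 subr0.
Qed.

Lemma mulX_Phi s : 'X * Phi s = Phi s.+1 + (alpha s)^* *: rev_conj s (Phi s).
Proof. by rewrite /= subrK. Qed.

Lemma rev_conj_PhiS s : rev_conj s.+1 (Phi s.+1) =
  (1 - alpha s * (alpha s)^*) *: rev_conj s (Phi s) - alpha s *: Phi s.+1.
Proof.
rewrite [in LHS]/= rev_conjB conjCK rev_conjS_mulX ?size_Phi //.
rewrite rev_conjS ?size_rev_conj // rev_conjK ?size_Phi // mulX_Phi.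
by rewrite scalerDr scalerA scalerBl scale1r opprD addrA addrAC.
Qed.

Lemma rev_conj_Phi_expansion s :
  rev_conj s (Phi s) = \sum_(u < s.+1) (rev_coef alpha beta s u)^* *: Phi u.
Proof.
elim: s => [|s IHs].
  by rewrite big_ord1 /rev_coef /rho2_prod /= big_geq // rmorph1 scale1r rev_conj1.
have rho2_conj : (1 + alpha s * beta s)^* = 1 - alpha s * (alpha s)^*.
  by rewrite /beta rmorphD rmorph1 rmorphM rmorphN /= conjCK mulrN mulrC.
rewrite rev_conj_PhiS IHs [in RHS]big_ord_recr /= scaler_sumr; congr (_ + _).
  apply: eq_bigr => u _; rewrite scalerA /rev_coef /rho2_prod.
  have le_us : (u <= s)%N by rewrite -ltnS.
  by case: eqP => _; rewrite big_nat_recr //= !rmorphM /= rho2_conj; congr (_ *: _); ring.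
by rewrite /rev_coef /rho2_prod /= big_geq // mulr1 /beta rmorphN /= conjCK scaleNr.
Qed.

Lemma mulX_Phi_expansion s N : (s.+1 < N)%N ->
  'X * Phi s = \sum_(t < N) (mulX_coef alpha beta s t)^* *: Phi t.
Proof.
move=> lt_sN.
rewrite -(@sum_ord_widen _ s.+2 N (fun t => (mulX_coef alpha beta s t)^* *: Phi t)) //;
  last by move=> t lt_st; rewrite mulX_coef_eq0 // conjC0 scale0r.
rewrite mulX_Phi rev_conj_Phi_expansion [in RHS]big_ord_recr /= /mulX_coef eqxx rmorph1 scale1r addrC.
congr (_ + _); rewrite scaler_sumr; apply: eq_bigr => t _.
by rewrite (ltn_eqF (ltn_ord t)) -ltnS ltn_ord rmorphM scalerA.
Qed.

Lemma mulXn_Phi_expansion n r N : (n + r < N)%N ->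
  'X^n * Phi r = \sum_(t < N) (gmoment alpha beta n r t)^* *: Phi t.
Proof.
elim: n N => [|n IHn] N lt_nrN.
  rewrite expr0 mul1r (bigD1 (Ordinal lt_nrN)) //= eqxx rmorph1 scale1r big1 ?addr0 //.
  by move=> t; rewrite -val_eqE /= add0n eq_sym => /negbTE ->; rewrite rmorph0 scale0r.
rewrite exprS -mulrA (IHn (n + r).+1) // mulr_sumr.
transitivity (\sum_(s < (n + r).+1) \sum_(t < N)
    ((gmoment alpha beta n r s)^* * (mulX_coef alpha beta s t)^*) *: Phi t).
  apply: eq_bigr => s _; rewrite -scalerAr (@mulX_Phi_expansion _ N); last first.
    by have := ltn_ord s; lia.
  by rewrite scaler_sumr; apply: eq_bigr => t _; rewrite scalerA.
rewrite exchange_big /=; apply: eq_bigr => t _.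
by rewrite -scaler_suml rmorph_sum; congr (_ *: _); apply: eq_bigr => s _; rewrite rmorphM.
Qed.

End SzegoRecursion.

Section OrthogonalityRelations.
Variables (C : numClosedFieldType) (alpha : nat -> C) (mom : int -> C).
Hypothesis L : is_OPUC_functional alpha mom.
Local Notation Phi := (Phi alpha).

Definition rho2 s := \prod_(j < s) (1 - `|alpha j| ^+ 2).

Lemma rho2_conj s : (rho2 s)^* = rho2 s.
Proof.
rewrite rmorph_prod; apply: eq_bigr => j _.
by rewrite rmorphB rmorph1 rmorphXn /= conj_normC.
Qed.

Lemma rho2_neq0 : (forall j, `|alpha j| < 1) -> forall s, rho2 s != 0.
Proof.
move=> alpha_lt1 s; apply/prodf_neq0 => j _.
by rewrite subr_eq0 gt_eqF // exprn_ilt1 ?normr_ge0.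
Qed.

Lemma ipz_Phi_orth m n : m <> n -> ipz mom (Phi m) (Phi n) 0 = 0.
Proof. exact: L.2. Qed.

Lemma ipz_PhiS_rev_conj s : ipz mom (Phi s.+1) (rev_conj s (Phi s)) 0 = 0.
Proof.
rewrite rev_conj_Phi_expansion ipz_sumr big1 // => u _.
by rewrite ipz_Phi_orth ?mulr0 // => eq_Su; have := ltn_ord u; rewrite -eq_Su ltnn.
Qed.

Lemma ipz_rev_conj_PhiS s : ipz mom (rev_conj s (Phi s)) (Phi s.+1) 0 = 0.
Proof.
rewrite rev_conj_Phi_expansion ipz_suml big1 // => u _.
by rewrite ipz_Phi_orth ?mulr0 // => eq_uS; have := ltn_ord u; rewrite eq_uS ltnn.
Qed.

(* The norms of [Phi s] and of [Phi s^*] must be computed together, since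
   each recursion step mixes the two. *)
Lemma ipz_Phi_rev_conj_norms s :
  ipz mom (Phi s) (Phi s) 0 = rho2 s /\
  ipz mom (rev_conj s (Phi s)) (rev_conj s (Phi s)) 0 = rho2 s.
Proof.
have ipz11 : ipz mom 1 1 0 = 1.
  rewrite (@ipz_widen _ _ _ _ _ 1 1) ?size_poly1 // !big_ord1 /ipz_term coef1 /=.
  by rewrite conjC1 !mul1r L.1.
elim: s => [|s [IHs IHs']]; first by rewrite /rho2 big_ord0 /= rev_conj1 ipz11.
set c := alpha s.
have rho2S : rho2 s.+1 = rho2 s * (1 - c * c^*) by rewrite /rho2 big_ord_recr /= normCK.
have ipz_rev_mulX : ipz mom (rev_conj s (Phi s)) ('X * Phi s) 0 = c * rho2 s.
  by rewrite mulX_Phi ipzDr ipzZr conjCK ipz_rev_conj_PhiS IHs' add0r.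
have PhiS : Phi s.+1 = 'X * Phi s - c^* *: rev_conj s (Phi s) by [].
have normS : ipz mom (Phi s.+1) (Phi s.+1) 0 = rho2 s.+1.
  rewrite {2}PhiS ipzBr ipz_PhiS_rev_conj mulr0 subr0 PhiS ipzBl ipz_mulX.
  by rewrite ipz_rev_mulX IHs rho2S; ring.
split=> //; rewrite rev_conj_PhiS -/c.
have rho2c_conj : (1 - c * c^*)^* = 1 - c * c^*.
  by rewrite rmorphB rmorph1 rmorphM /= conjCK mulrC.
move: (ipz_PhiS_rev_conj s) (ipz_rev_conj_PhiS s) normS IHs'.
move: (Phi s.+1) (rev_conj s (Phi s)) => G A GA AG GG AA.
by rewrite !ipzBl !ipzBr !ipzZl !ipzZr GA AG GG AA rho2c_conj rho2S; ring.
Qed.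

Lemma ipz_Phi_norm s : ipz mom (Phi s) (Phi s) 0 = rho2 s.
Proof. exact: (ipz_Phi_rev_conj_norms s).1. Qed.

Lemma gmu_gmoment (alpha_lt1 : forall j, `|alpha j| < 1) n r t :
  gmu alpha mom n%:Z r t = gmoment alpha (beta alpha) n r t.
Proof.
rewrite /gmu /ip -(add0r n%:Z) -ipz_mulXnr.
have lt_nr : (n + r < (maxn (n + r) t).+1)%N by rewrite ltnS leq_maxl.
have lt_t : (t < (maxn (n + r) t).+1)%N by rewrite ltnS leq_maxr.
rewrite (mulXn_Phi_expansion alpha lt_nr) ipz_sumr (bigD1 (Ordinal lt_t)) //=.
rewrite big1 ?addr0 => [|u ne_ut]; first by rewrite conjCK ipz_Phi_norm mulfK ?rho2_neq0.
by rewrite ipz_Phi_orth ?mulr0 // => eq_tu; move: ne_ut; rewrite -val_eqE /= -eq_tu eqxx.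
Qed.

End OrthogonalityRelations.

Section Hermitian.
Variables (C : numClosedFieldType) (alpha : nat -> C).

Lemma OPUC_mom_succ mom : is_OPUC_functional alpha mom -> forall K : nat,
  mom K.+1%:Z = - \sum_(i < K.+1) (Phi alpha K.+1)`_i * mom i%:Z.
Proof.
move=> L K; have : ip mom (Phi alpha K.+1) (Phi alpha 0) = 0 by apply: L.2.
rewrite /ip (@ipz_widen _ _ _ _ _ K.+2 1) ?size_Phi ?size_poly1 //.
have := coef_Phi_deg alpha K.+1; move: (Phi alpha K.+1) => P P_deg.
under eq_bigr do rewrite big_ord1 /ipz_term coef1 /= conjC1 mulr1 !subr0.
by rewrite big_ord_recr /= P_deg mul1r addrC => /eqP; rewrite addr_eq0 => /eqP.
Qed.

Lemma OPUC_functional_conj mom : is_OPUC_functional alpha mom ->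
  is_OPUC_functional alpha (fun k => (mom (- k))^*).
Proof.
move=> L; split=> [|m n ne_mn]; first by rewrite oppr0 L.1 conjC1.
by rewrite /ip ipz_conj oppr0 -/(ip _ _ _) L.2 ?conjC0 // => /esym.
Qed.

Lemma OPUC_mom_uniq mom1 mom2 :
  is_OPUC_functional alpha mom1 -> is_OPUC_functional alpha mom2 ->
  forall K : nat, mom1 K%:Z = mom2 K%:Z.
Proof.
move=> L1 L2; elim/ltn_ind => -[|K] IHK; first by rewrite L1.1 L2.1.
rewrite (OPUC_mom_succ L1) (OPUC_mom_succ L2); congr (- _).
by apply: eq_bigr => i _; rewrite IHK.
Qed.

Variable mom : int -> C.
Hypothesis L : is_OPUC_functional alpha mom.

Lemma OPUC_momN k : mom (- k) = (mom k)^*.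
Proof.
have momN_nat (K : nat) : (mom (- K%:Z))^* = mom K%:Z.
  exact: OPUC_mom_uniq (OPUC_functional_conj L) L K.
case: k => K; first by rewrite -momN_nat conjCK.
by rewrite NegzE opprK momN_nat.
Qed.

Lemma ipzN f g n : ipz mom f g (- n) = (ipz mom g f n)^*.
Proof.
rewrite -[n in RHS]opprK -ipz_conj /ipz; apply: eq_bigr => i _; apply: eq_bigr => j _.
by rewrite OPUC_momN conjCK opprK.
Qed.

Lemma gmuN (alpha_lt1 : forall j, `|alpha j| < 1) n r s :
  gmu alpha mom (- n) r s = (gmu alpha mom n s r)^* * (rho2 alpha r / rho2 alpha s).
Proof.
rewrite /gmu ipzN /ip !ipz_Phi_norm // rmorphM /= fmorphV /= rho2_conj.
by rewrite mulrA mulfVK ?rho2_neq0.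
Qed.

Lemma muN (alpha_lt1 : forall j, `|alpha j| < 1) n :
  mu alpha mom (- n) = (mu alpha mom n)^*.
Proof. by rewrite /mu gmuN // /rho2 !big_ord0 divr1 mulr1. Qed.

End Hermitian.

Section SplitVariables.
Variables (R : nzRingType) (k : nat).

Definition mvar_l (j : nat) : {mpoly R[k + k]} :=
  if insub j is Some i then 'X_(lshift k i) else 0.

Definition mvar_r (j : nat) : {mpoly R[k + k]} :=
  if insub j is Some i then 'X_(rshift k i) else 0.

Variables (S : comNzRingType) (f : {rmorphism R -> S}) (v : 'I_(k + k) -> S).

Lemma mmap_mvar_l j (lt_jk : (j < k)%N) : mmap f v (mvar_l j) = v (lshift k (Ordinal lt_jk)).
Proof. by rewrite /mvar_l insubT mmapX mmap1U. Qed.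

Lemma mmap_mvar_r j (lt_jk : (j < k)%N) : mmap f v (mvar_r j) = v (rshift k (Ordinal lt_jk)).
Proof. by rewrite /mvar_r insubT mmapX mmap1U. Qed.

End SplitVariables.
Arguments mvar_l {R k} j.
Arguments mvar_r {R k} j.

Lemma nneg_mvar_l (R : numDomainType) k j : nneg_mpoly (@mvar_l R k j).
Proof. by rewrite /mvar_l; case: insub => [i|]; [exact: nneg_mpolyX | exact: nneg_mpoly0]. Qed.

Lemma nneg_mvar_r (R : numDomainType) k j : nneg_mpoly (@mvar_r R k j).
Proof. by rewrite /mvar_r; case: insub => [i|]; [exact: nneg_mpolyX | exact: nneg_mpoly0]. Qed.

Section Valuations.
Variables (C : numClosedFieldType) (alpha : nat -> C) (k : nat) (i : 'I_k).

Lemma val_ac_lshift : val_ac alpha k (lshift k i) = alpha i.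
Proof. by rewrite /val_ac (unsplitK (inl _ i)). Qed.

Lemma val_ac_rshift : val_ac alpha k (rshift k i) = (alpha i)^*.
Proof. by rewrite /val_ac (unsplitK (inr _ i)). Qed.

Lemma val_ab_lshift : val_ab alpha k (lshift k i) = alpha i.
Proof. by rewrite /val_ab (unsplitK (inl _ i)). Qed.

Lemma val_ab_rshift : val_ab alpha k (rshift k i) = - (alpha i)^*.
Proof. by rewrite /val_ab (unsplitK (inr _ i)). Qed.

End Valuations.

Lemma gmu_zeval (C : numClosedFieldType) k (v : 'I_k -> C) (a b : nat -> {mpoly int[k]})
    (alpha : nat -> C) (mom : int -> C) n r s :
  (forall j, `|alpha j| < 1) -> is_OPUC_functional alpha mom ->
  (forall j, (j < n + r)%N -> zeval v (a j) = alpha j /\ zeval v (b j) = beta alpha j) ->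
  gmu alpha mom n%:Z r s = zeval v (gmoment a b n r s).
Proof.
move=> alpha_lt1 L ab_v; rewrite gmu_gmoment // /zeval rmorph_gmoment.
by apply: eq_gmoment => j /ab_v [a_v b_v]; rewrite /= -a_v -b_v.
Qed.

Theorem theorem3p2 (C : numClosedFieldType) :
  (* integrality: a polynomial with integer coefficients in alpha_j, conj alpha_j, j < n + r *)
  (forall n r s : nat, exists P : {mpoly int[((n + r) + (n + r))%N]},
     forall (alpha : nat -> C) (mom : int -> C),
       (forall j, `|alpha j| < 1) -> is_OPUC_functional alpha mom ->
       gmu alpha mom n%:Z r s = zeval (val_ac alpha (n + r)%N) P) /\
  (* positivity: a polynomial in alpha_j, beta_j = - conj alpha_j with
     nonnegative (i.e. all nonzero coefficients positive) integer coefficients *)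
  (forall n r s : nat, exists (k : nat) (Q : {mpoly int[(k + k)%N]}),
     (forall m, 0 <= Q@_m) /\
     forall (alpha : nat -> C) (mom : int -> C),
       (forall j, `|alpha j| < 1) -> is_OPUC_functional alpha mom ->
       gmu alpha mom n%:Z r s = zeval (val_ab alpha k) Q) /\
  (* reciprocity *)
  (forall (alpha : nat -> C) (mom : int -> C),
     (forall j, `|alpha j| < 1) -> is_OPUC_functional alpha mom ->
     (forall (n : int) (r s : nat),
        gmu alpha mom (- n) r s =
        (gmu alpha mom n s r)^* *
          ((\prod_(j < r) (1 - `|alpha j| ^+ 2)) / (\prod_(j < s) (1 - `|alpha j| ^+ 2)))) /\
     (forall n : int, mu alpha mom (- n) = (mu alpha mom n)^*)).
Proof.
split; [|split].
- move=> n r s; exists (gmoment mvar_l (fun j => - mvar_r j) n r s).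
  move=> alpha mom alpha_lt1 L; apply: gmu_zeval => // j lt_j.
  by rewrite /zeval rmorphN /= mmap_mvar_l mmap_mvar_r val_ac_lshift val_ac_rshift.
- move=> n r s; exists (n + r)%N, (gmoment mvar_l mvar_r n r s); split.
    by apply: nneg_gmoment => j; [exact: nneg_mvar_l | exact: nneg_mvar_r].
  move=> alpha mom alpha_lt1 L; apply: gmu_zeval => // j lt_j.
  by rewrite /zeval mmap_mvar_l mmap_mvar_r val_ab_lshift val_ab_rshift.
- move=> alpha mom alpha_lt1 L.
  by split=> [n r s | n]; [exact: gmuN | exact: muN].
Qed.
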